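(* Let $a,b$ be integers and let $G\in\mathscr{G}_{a,b}$ be a tricyclic graph with at least one pendant vertex. Suppose $C_p=vu_1u_2\ldots u_{p-1}v$ is an internal cycle of the base $\widetilde G$ with $N_{\widetilde G}(v)=\{w,u_1,u_{p-1}\}$. Then $d_G(v)=3$, $p=3$ and $G\in\mathscr{G}_{6,-1}$. Moreover, $d_G(w)=2$, and one of $u_1,u_{p-1}$ has degree $2$ in $G$ while the other has degree $a+b-1=4$ in $G$.
   Context: All graphs are simple and connected; $d_G(v)$ is the degree of $v$, $N_G(v)$ its neighbourhood. A tricyclic graph is a connected graph with $|E_G|=|V_G|+2$. For integers $a,b$, $\mathscr{G}_{a,b}$ is the set of connected graphs $G$ such that for every $v\in V_G$, $\sum_{u\in N_G(v)}d_G(u)=a\,d_G(v)+b-d_G(v)^2$. A pendant vertex is a vertex of degree $1$. The base $\widetilde{G}$ of $G$ is the subgraph obtained from $G$ by repeatedly deleting pendant vertices until none remain. An internal cycle of $\widetilde G$ is a cycle $u_0u_1\ldots u_k$ with $u_0=u_k$, $k\ge 3$, $d_{\widetilde G}(u_0)\ge 3$ and $d_{\widetilde G}(u_i)=2$ for $1\le i\le k-1$. *)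

From mathcomp Require Import all_boot all_order all_algebra.
Set Implicit Arguments. Unset Strict Implicit. Unset Printing Implicit Defensive.
Import GRing.Theory Num.Theory.
Local Open Scope ring_scope.

Section Graph.
Variables (T : finType) (e : rel T).

Definition simple_graph : Prop := symmetric e /\ irreflexive e.
Definition connected_graph : Prop := forall x y : T, connect e x y.

Definition nbhd (v : T) : {set T} := [set u | e v u].
Definition deg (v : T) : nat := #|nbhd v|.

Definition edges : {set {set T}} := [set [set x; y] | x in T, y in T & e x y].

Definition tricyclic : Prop := #|edges| = (#|T| + 2)%N.

Definition in_Gab (a b : int) : Prop :=
  forall v : T, ((\sum_(u in nbhd v) deg u)%N)%:Z
                = a * (deg v)%:Z + b - ((deg v)%:Z) ^+ 2.

Definition pendant (v : T) : Prop := deg v = 1%N.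

Definition degIn (S : {set T}) (v : T) : nat := #|[set u in S | e v u]|.

Inductive prune_reach (S : {set T}) : {set T} -> Prop :=
  | prune_refl : prune_reach S S
  | prune_step (S' : {set T}) (x : T) :
      prune_reach S S' -> x \in S' -> degIn S' x = 1%N -> prune_reach S (S' :\ x).

Definition is_base (B : {set T}) : Prop :=
  prune_reach [set: T] B /\ (forall x, x \in B -> degIn B x != 1%N).

(* internal cycle v u_1 ... u_{p-1} v of the base (induced on B),
   given by v and the sequence us = [:: u_1; ...; u_{p-1}], p = size us + 1 *)
Definition internal_cycle (B : {set T}) (v : T) (us : seq T) : Prop :=
  (2 <= size us)%N /\
  [/\ uniq (v :: us),
      path e v us && e (last v us) v,
      all (fun x => x \in B) (v :: us),
      (3 <= degIn B v)%N &
      all (fun x => degIn B x == 2%N) us].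

End Graph.

(* The equation of G_{a,b} at a pendant vertex says that its
   neighbour has degree k = a + b - 1.  Comparing the equations at a vertex z
   with a pendant neighbour and at a neighbour t of z shows that if every
   neighbour of z but t is pendant, then so is every neighbour of t but z; the
   graph would then be a "double star", impossible in a graph with a cycle.
   Hence every vertex with a pendant neighbour has two non-pendant neighbours,
   so pruning only ever deletes vertices that are pendant in G: everything
   outside the base is pendant.  Every vertex of the internal cycle therefore
   has degree 2 or k (degree 3 or k for v), and the equations along the cycle
   become a small polynomial system in a and b whose only solution has p = 3,
   a = 6, b = -1. *)

From mathcomp Require Import all_boot all_order all_algebra zify ring.
Import GRing.Theory Num.Theory.
Set Implicit Arguments. Unset Strict Implicit. Unset Printing Implicit Defensive.
Local Open Scope ring_scope.

Lemma leq_card_sum (T : finType) (A : {set T}) (F : T -> nat) :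
  (forall i, i \in A -> 0 < F i)%N -> (#|A| <= \sum_(i in A) F i)%N.
Proof. by move=> F_gt0; rewrite -sum1_card; apply: leq_sum. Qed.

Lemma sum_leq_card_eq1 (T : finType) (A : {set T}) (F : T -> nat) :
  (forall i, i \in A -> 0 < F i)%N -> (\sum_(i in A) F i <= #|A|)%N ->
  forall i, i \in A -> F i = 1%N.
Proof.
move=> F_gt0 sumA i iA; apply/eqP; rewrite eqn_leq F_gt0 // andbT leqNgt.
apply/negP => Fi_gt1; move: sumA; rewrite (big_setD1 i iA) (cardsD1 i A) iA /=.
have := @leq_card_sum _ (A :\ i) F (fun j jA => F_gt0 j (proj2 (setD1P jA))).
lia.
Qed.

Lemma mul_consecutive_ge0 (x : int) : 0 <= x * (x + 1).
Proof. have [x_neg | x_nneg] : x <= -1 \/ 0 <= x by lia. all: nia. Qed.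

(* [s - m] factors as [- (K-2)(K-1) (a-K-2)(a-K-1)], minus a product of two
   products of consecutive integers. *)
Lemma pendant_but_arith (a b K D c m s : int) : K = a + b - 1 -> K = 1 + c ->
  D = 1 + m -> D + c = a * K + b - K ^+ 2 -> K + s = a * D + b - D ^+ 2 -> s <= m.
Proof.
move=> Kab Kc Dm eqz eqt.
have bE : b = K + 1 - a by rewrite Kab; ring.
have DE : D = a * K + b - K ^+ 2 - (K - 1) by rewrite -eqz Kc; ring.
have -> : s = a * D + b - D ^+ 2 - K by rewrite -eqt; ring.
have -> : m = D - 1 by rewrite Dm; ring.
rewrite -subr_le0.
have -> : a * D + b - D ^+ 2 - K - (D - 1) =
    - ((K - 2) * (K - 2 + 1) * ((a - K - 2) * (a - K - 2 + 1))).
  by rewrite DE bE; ring.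
by rewrite oppr_le0 mulr_ge0 ?mul_consecutive_ge0.
Qed.

Lemma three_cycle_arith (a b dv dw d1 d2 : int) :
  3 <= a + b - 1 -> 2 <= dw ->
  dv = 3 \/ dv = a + b - 1 -> d1 = 2 \/ d1 = a + b - 1 -> d2 = 2 \/ d2 = a + b - 1 ->
  dw + d1 + d2 + (dv - 3) = a * dv + b - dv ^+ 2 ->
  dv + d2 + (d1 - 2) = a * d1 + b - d1 ^+ 2 ->
  d1 + dv + (d2 - 2) = a * d2 + b - d2 ^+ 2 ->
  [/\ dv = 3, dw = 2, a = 6, b = -1 & (d1 = 2 /\ d2 = 4 \/ d2 = 2 /\ d1 = 4)].
Proof.
move=> k3 dw2 [->|->] [->|->] [->|->]; rewrite ?expr2 => hv h1 h2.
all: have [ha|[ha|ha]] : a <= a + b + 1 \/ a = a + b + 2 \/ a + b + 3 <= a by lia.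
all: first [exfalso; nia | split; [nia|nia|nia|nia| first [left; split; nia | right; split; nia]]].
Qed.

Lemma long_cycle_arith (a b dv dw d1 d2 d3 dl dl1 dl2 : int) :
  3 <= a + b - 1 -> 2 <= dw ->
  dv = 3 \/ dv = a + b - 1 -> d1 = 2 \/ d1 = a + b - 1 -> d2 = 2 \/ d2 = a + b - 1 ->
  d3 = 2 \/ d3 = a + b - 1 -> dl = 2 \/ dl = a + b - 1 -> dl1 = 2 \/ dl1 = a + b - 1 ->
  dl2 = 2 \/ dl2 = a + b - 1 ->
  dw + d1 + dl + (dv - 3) = a * dv + b - dv ^+ 2 ->
  dv + d2 + (d1 - 2) = a * d1 + b - d1 ^+ 2 ->
  d1 + d3 + (d2 - 2) = a * d2 + b - d2 ^+ 2 ->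
  dl1 + dv + (dl - 2) = a * dl + b - dl ^+ 2 ->
  dl2 + dl + (dl1 - 2) = a * dl1 + b - dl1 ^+ 2 -> False.
Proof.
move=> k3 dw2 [->|->] [->|->] [->|->] [->|->] [->|->] [->|->] [->|->];
  rewrite ?expr2 => hv h1 h2 hl hl1.
all: have [ha|[ha|ha]] : a <= a + b + 1 \/ a = a + b + 2 \/ a + b + 3 <= a by lia.
all: try nia.
all: have [hk|[hk|hk]] : a + b = 4 \/ a + b = 5 \/ 6 <= a + b by lia.
all: nia.
Qed.

Section GabGraph.
Variables (T : finType) (e : rel T) (a b : int).
Hypotheses (e_sym : symmetric e) (e_conn : connected_graph e) (eGab : in_Gab e a b).

Lemma in_nbhd x y : (y \in nbhd e x) = e x y.
Proof. by rewrite inE. Qed.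

Lemma deg_gt0 x y : e x y -> (0 < deg e x)%N.
Proof. by move=> exy; rewrite card_gt0; apply/set0Pn; exists y; rewrite in_nbhd. Qed.

Lemma degIn_le (B : {set T}) x : (degIn e B x <= deg e x)%N.
Proof. by apply: subset_leq_card; apply/subsetP => u; rewrite !inE => /andP[]. Qed.

Lemma pendant_nbhd l x : pendant e l -> e l x -> nbhd e l = [set x].
Proof.
move=> pl elx; apply/eqP; rewrite eq_sym eqEcard sub1set in_nbhd elx cards1.
by rewrite -pl /=.
Qed.

Lemma pendant_nbr_deg l x : pendant e l -> e l x -> (deg e x)%:Z = a + b - 1.
Proof.
move=> pl elx; have := eGab l; rewrite (pendant_nbhd pl elx) big_set1 pl => ->.
by rewrite mulr1 expr1n.
Qed.

Lemma closed_connected (C : {set T}) z : z \in C ->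
  (forall x y, x \in C -> e x y -> y \in C) -> forall y, y \in C.
Proof.
move=> zC closedC y; have /connectP [p zp ->] := e_conn z y.
elim: p z zC zp => //= x p IHp z zC /andP [ezx xp].
exact: IHp (closedC _ _ zC ezx) xp.
Qed.

Definition pendant_but (z t : T) := forall u, e z u -> u != t -> pendant e u.

Lemma pendant_but_cover z t : pendant_but z t -> pendant_but t z ->
  forall x, [|| x == z, x == t, e z x | e t x].
Proof.
move=> pzt ptz x; pose C := [set x | [|| x == z, x == t, e z x | e t x]].
have leaf_back u r s : e r u -> pendant e u -> e u s -> s = r.
  move=> eru pu eus; apply/set1P.
  by rewrite -(pendant_nbhd pu (x := r)) ?in_nbhd // e_sym.
have closedC y y' : y \in C -> e y y' -> y' \in C.
  rewrite !inE => /or4P[/eqP-> | /eqP-> | ezy | ety] eyy'.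
  - by rewrite eyy' !orbT.
  - by rewrite eyy' !orbT.
  - have [<- | yt] := eqVneq y t; first by rewrite eyy' !orbT.
    by rewrite (leaf_back _ _ _ ezy (pzt _ ezy yt) eyy') eqxx.
  - have [<- | yz] := eqVneq y z; first by rewrite eyy' !orbT.
    by rewrite (leaf_back _ _ _ ety (ptz _ ety yz) eyy') eqxx orbT.
have zC : z \in C by rewrite inE eqxx.
by have := closed_connected zC closedC x; rewrite inE.
Qed.

Lemma pendant_but_transfer z l t :
  e z l -> pendant e l -> e z t -> pendant_but z t -> pendant_but t z.
Proof.
move=> ezl pl ezt pzt.
have degzE : (deg e z)%:Z = a + b - 1 by apply: (pendant_nbr_deg pl); rewrite e_sym.
have degz : deg e z = (1 + #|nbhd e z :\ t|)%N by rewrite /deg (cardsD1 t) in_nbhd ezt.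
have degt : deg e t = (1 + #|nbhd e t :\ z|)%N.
  by rewrite /deg (cardsD1 z) in_nbhd e_sym ezt.
have sumz : (\sum_(u in nbhd e z) deg e u = deg e t + #|nbhd e z :\ t|)%N.
  rewrite (big_setD1 t) ?in_nbhd //= -sum1_card; congr (_ + _)%N.
  by apply: eq_bigr => u; rewrite !inE => /andP[ut ezu]; apply: pzt.
have sumt : (\sum_(u in nbhd e t) deg e u =
             deg e z + \sum_(u in nbhd e t :\ z) deg e u)%N.
  by rewrite (big_setD1 z) ?in_nbhd 1?e_sym.
have nbr_gt0 u : u \in nbhd e t :\ z -> (0 < deg e u)%N.
  by rewrite !inE => /andP[_ etu]; apply: (deg_gt0 (y := t)); rewrite e_sym.
suff sum_le : (\sum_(u in nbhd e t :\ z) deg e u <= #|nbhd e t :\ z|)%N.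
  by move=> u etu uz; apply: (sum_leq_card_eq1 nbr_gt0 sum_le); rewrite !inE uz etu.
have := eGab z; have := eGab t; rewrite sumz sumt !PoszD => eqt eqz.
rewrite -lez_nat; apply: (pendant_but_arith degzE _ _ eqz eqt).
- by rewrite degz PoszD.
- by rewrite degt PoszD.
Qed.

Section Branching.
Variables (v0 u1 u2 : T).
Hypotheses (ev0u1 : e v0 u1) (ev0u2 : e v0 u2) (u1_neq_u2 : u1 != u2).
Hypotheses (v0_npd : ~ pendant e v0) (u1_npd : ~ pendant e u1) (u2_npd : ~ pendant e u2).

Lemma no_double_star z t : pendant_but z t -> pendant_but t z -> False.
Proof.
move=> pzt ptz.
have nonpendant_nbr r s u : pendant_but r s -> e r u -> ~ pendant e u -> u = s.
  by move=> prs eru npu; case: (eqVneq u s) => // us; case: npu; apply: prs.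
have [v0z | v0t] : v0 = z \/ v0 = t.
  case/or4P: (pendant_but_cover pzt ptz v0) => [/eqP | /eqP | ezv0 | etv0];
    [left | right | |] => //.
  - by case: (eqVneq v0 t) => [|v0t]; [right | case: v0_npd; apply: pzt].
  - by case: (eqVneq v0 z) => [|v0z]; [left | case: v0_npd; apply: ptz].
- rewrite -v0z in pzt; apply: (negP u1_neq_u2).
  by rewrite (nonpendant_nbr _ _ _ pzt ev0u1 u1_npd) (nonpendant_nbr _ _ _ pzt ev0u2 u2_npd).
- rewrite -v0t in ptz; apply: (negP u1_neq_u2).
  by rewrite (nonpendant_nbr _ _ _ ptz ev0u1 u1_npd) (nonpendant_nbr _ _ _ ptz ev0u2 u2_npd).
Qed.

Lemma pendant_nbr_avoid z l t :
  e z l -> pendant e l -> exists u, [/\ e z u, u != t & ~ pendant e u].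
Proof.
move=> ezl pl.
case: (pickP [pred u | [&& e z u, u != t & deg e u != 1%N]]).
  by move=> u /and3P[ezu ut /eqP npu]; exists u.
move=> none; have pzt : pendant_but z t.
  by move=> u ezu ut; apply/eqP; move: (none u) => /=; rewrite ezu ut => /negbFE.
exfalso; have [ezt | nezt] := boolP (e z t).
  exact: no_double_star pzt (pendant_but_transfer ezl pl ezt pzt).
have pzz : pendant_but z z.
  by move=> u ezu _; apply: (pzt u ezu); apply: contraNneq nezt => <-.
exact: (no_double_star pzz pzz).
Qed.

Lemma pendant_of_pruned S : prune_reach e setT S -> forall x, x \notin S -> pendant e x.
Proof.
elim=> [|S' x _ IH xS' degx] y; first by rewrite inE.
rewrite in_setD1 negb_and negbK => /orP[/eqP-> | yS']; last exact: IH.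
have /cards1P [t tE] : #|[set u in S' | e x u]| == 1%N by apply/eqP.
have ext : e x t by have := set11 t; rewrite -tE inE => /andP[].
have nbr_out u : e x u -> u != t -> u \notin S'.
  by move=> exu; apply: contra => uS'; rewrite -in_set1 -tE inE uS' exu.
apply/eqP; apply: contraT => degx1.
have [l exl lt] : exists2 l, e x l & l != t.
  have : (0 < #|nbhd e x :\ t|)%N.
    by move: degx1 (deg_gt0 ext); rewrite /deg (cardsD1 t) in_nbhd ext; lia.
  by rewrite card_gt0 => /set0Pn [l]; rewrite !inE => /andP[lt exl]; exists l.
have [u [exu ut npu]] := pendant_nbr_avoid t exl (IH l (nbr_out l exl lt)).
by case: npu; apply: IH; apply: nbr_out.
Qed.

Lemma pendant_k_ge3 x0 : pendant e x0 -> 3 <= a + b - 1.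
Proof.
move=> px0; have /cards1P [y yE] : #|nbhd e x0| == 1%N by apply/eqP.
have ex0y : e x0 y by rewrite -in_nbhd yE set11.
have eyx0 : e y x0 by rewrite e_sym.
have [n1 [eyn1 n1x0 _]] := pendant_nbr_avoid x0 eyx0 px0.
have [n2 [eyn2 n2n1 np2]] := pendant_nbr_avoid n1 eyx0 px0.
have n2x0 : n2 != x0 by apply: contra_not_neq np2 => ->.
have : (3 <= deg e y)%N.
  have <- : #|x0 |: [set n1; n2]| = 3%N.
    by rewrite cardsU1 cards2 !inE !negb_or !(eq_sym x0) n1x0 n2x0 (eq_sym n1) n2n1.
  by apply: subset_leq_card; apply/subsetP => u; rewrite !inE => /or3P[] /eqP->.
by rewrite -(pendant_nbr_deg px0 ex0y); lia.
Qed.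

End Branching.

Section Base.
Variable B : {set T}.
Hypothesis outside_pendant : forall x, x \notin B -> pendant e x.

Lemma base_vertex_eq x :
  ((deg e x)%:Z = (degIn e B x)%:Z \/ (deg e x)%:Z = a + b - 1) /\
  (\sum_(u in [set u in B | e x u]) deg e u)%:Z + ((deg e x)%:Z - (degIn e B x)%:Z)
    = a * (deg e x)%:Z + b - (deg e x)%:Z ^+ 2.
Proof.
have nbrBE : [set u in B | e x u] = nbhd e x :&: B.
  by apply/setP => u; rewrite !inE andbC.
have degE : deg e x = (degIn e B x + #|nbhd e x :\: B|)%N.
  by rewrite /degIn nbrBE cardsID.
have sumE : (\sum_(u in nbhd e x) deg e u =
    \sum_(u in [set u in B | e x u]) deg e u + #|nbhd e x :\: B|)%N.
  rewrite (big_setID B) nbrBE /= -sum1_card; congr (_ + _)%N.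
  by apply: eq_bigr => u; rewrite inE => /andP[uB _]; apply: outside_pendant.
split.
  case: (posnP #|nbhd e x :\: B|) => [out0 | ]; first by left; rewrite degE out0 addn0.
  rewrite card_gt0 => /set0Pn [u]; rewrite !inE => /andP[uB exu]; right.
  by apply: (pendant_nbr_deg (outside_pendant uB)); rewrite e_sym.
by rewrite -(eGab x) sumE degE !PoszD; ring.
Qed.

End Base.

Section InternalCycle.
Variables (B : {set T}) (v w : T) (us : seq T).
Hypotheses (B_base : is_base e B) (us_cycle : internal_cycle e B v us).
Hypothesis nbrB_v : [set x in B | e v x] = [set w; nth v us 0; last v us].

(* [cyc n.+1] falls off the sequence and defaults to [v], closing the cycle. *)
Local Notation cyc i := (nth v (v :: us) i).
Local Notation n := (size us).

Lemma cycle_size_ge2 : (2 <= n)%N.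
Proof. by case: us_cycle. Qed.

Lemma cycle_nth_eq i j : (i <= n)%N -> (j <= n)%N -> (cyc i == cyc j) = (i == j).
Proof. by case: us_cycle => _ [uniq_c _ _ _ _] i_le j_le; apply: nth_uniq. Qed.

Lemma cycle_wrap : cyc n.+1 = v.
Proof. exact: nth_default. Qed.

Lemma cycle_nth_base i : cyc i \in B.
Proof.
case: us_cycle => _ [_ _ /allP c_B _ _]; apply: c_B.
by case: (ltnP i n.+1) => [i_lt | i_ge]; [exact: mem_nth | rewrite nth_default ?mem_head].
Qed.

Lemma cycle_edge i : (i <= n)%N -> e (cyc i) (cyc i.+1).
Proof.
case: us_cycle => _ [_ /andP[/(pathP v) c_path last_v] _ _ _].
rewrite leq_eqVlt => /orP[/eqP-> | i_lt]; last exact: c_path.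
by rewrite cycle_wrap -last_nth.
Qed.

Lemma cycle_degIn i : (0 < i <= n)%N -> degIn e B (cyc i) = 2%N.
Proof.
case: us_cycle => _ [_ _ _ _ /all_nthP deg2]; case: i => // i /andP[_ i_lt].
exact/eqP/(deg2 v).
Qed.

Lemma cycle_nonpendant i : (i <= n)%N -> ~ pendant e (cyc i).
Proof.
move=> i_le pi; have := degIn_le B (cyc i); rewrite {}pi.
case: i i_le => [_ /= | i i_le]; first by case: us_cycle => _ [_ _ _ degv _]; lia.
by rewrite cycle_degIn.
Qed.

Lemma cycle_ends : [/\ e v (cyc 1), e v (cyc n) & cyc 1 != cyc n].
Proof.
have n_ge2 := cycle_size_ge2.
split; first exact: (cycle_edge (i := 0)).
  by rewrite e_sym -[X in e _ X]cycle_wrap; apply: cycle_edge.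
by rewrite cycle_nth_eq //; lia.
Qed.

Lemma base_outside_pendant x : x \notin B -> pendant e x.
Proof.
have [[ev1 evn c1n] [B_pruned _]] := (cycle_ends, B_base).
have one_le_n : (1 <= n)%N by have := cycle_size_ge2; lia.
exact: (pendant_of_pruned ev1 evn c1n (cycle_nonpendant (leq0n n))
  (cycle_nonpendant one_le_n) (cycle_nonpendant (leqnn n)) B_pruned).
Qed.

Lemma cycle_k_ge3 : (exists x, pendant e x) -> 3 <= a + b - 1.
Proof.
have [ev1 evn c1n] := cycle_ends; case=> x px.
have one_le_n : (1 <= n)%N by have := cycle_size_ge2; lia.
exact: (pendant_k_ge3 ev1 evn c1n (cycle_nonpendant (leq0n n))
  (cycle_nonpendant one_le_n) (cycle_nonpendant (leqnn n)) px).
Qed.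

Lemma cycle_vertex_eq i : (0 < i <= n)%N ->
  let d := (deg e (cyc i))%:Z in
  (d = 2 \/ d = a + b - 1) /\
  (deg e (cyc i.-1))%:Z + (deg e (cyc i.+1))%:Z + (d - 2) = a * d + b - d ^+ 2.
Proof.
move=> i_range d; have n_ge2 := cycle_size_ge2.
have [d_cases eq_i] := base_vertex_eq base_outside_pendant (cyc i).
rewrite cycle_degIn // in d_cases eq_i; split => //.
have prev_next : cyc i.-1 != cyc i.+1.
  have [i_lt | i_ge] := ltnP i n; first by rewrite cycle_nth_eq //; lia.
  have -> : i = n by lia.
  by rewrite cycle_wrap -[X in _ != X]/(cyc 0) cycle_nth_eq //; lia.
have nbrBE : [set u in B | e (cyc i) u] = [set cyc i.-1; cyc i.+1].
  apply/eqP; rewrite eq_sym eqEcard cards2 prev_next -/(degIn e B _) cycle_degIn //.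
  rewrite andbT; apply/subsetP => u; rewrite !inE => /orP[] /eqP->;
    rewrite cycle_nth_base /=.
    by rewrite e_sym; have := @cycle_edge i.-1; rewrite prednK; [apply; lia | lia].
  by apply: cycle_edge; lia.
by rewrite -eq_i nbrBE big_setU1 ?inE //= big_set1 PoszD.
Qed.

Lemma v_nbrB : w \notin [set cyc 1; cyc n] /\ [set x in B | e v x] = w |: [set cyc 1; cyc n].
Proof.
have nbrBE : [set x in B | e v x] = w |: [set cyc 1; cyc n].
  by rewrite nbrB_v (last_nth v); apply/setP => x; rewrite !inE orbA.
split=> //; have [_ _ c1n] := cycle_ends.
case: us_cycle => _ [_ _ _ degv _]; move: degv.
by rewrite /degIn nbrBE cardsU1 cards2 c1n; case: (w \in _).
Qed.

Lemma v_vertex_eq : let d := (deg e v)%:Z in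
  (d = 3 \/ d = a + b - 1) /\
  (deg e w)%:Z + (deg e (cyc 1))%:Z + (deg e (cyc n))%:Z + (d - 3) = a * d + b - d ^+ 2.
Proof.
move=> d; have [w_out nbrBE] := v_nbrB; have [_ _ c1n] := cycle_ends.
have [d_cases eq_v] := base_vertex_eq base_outside_pendant v.
have degv : degIn e B v = 3%N by rewrite /degIn nbrBE cardsU1 cards2 c1n w_out.
rewrite degv in d_cases eq_v; split => //.
by rewrite -eq_v nbrBE big_setU1 //= big_setU1 ?inE //= big_set1 !PoszD; lia.
Qed.

Lemma w_deg_ge2 : (2 <= deg e w)%N.
Proof.
have [_ nbrBE] := v_nbrB; have [_ w_nonpendant] := B_base.
have /[!inE] /andP[wB evw] : w \in [set x in B | e v x] by rewrite nbrBE setU11.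
have : (0 < degIn e B w)%N.
  by rewrite card_gt0; apply/set0Pn; exists v; rewrite inE (cycle_nth_base 0) e_sym.
by have := w_nonpendant w wB; have := degIn_le B w; lia.
Qed.

Lemma three_cycle_degrees : n = 2%N -> 3 <= a + b - 1 ->
  [/\ deg e v = 3%N, deg e w = 2%N, a = 6, b = -1 &
      ((deg e (cyc 1))%:Z = 2 /\ (deg e (cyc n))%:Z = 4 \/
       (deg e (cyc n))%:Z = 2 /\ (deg e (cyc 1))%:Z = 4)].
Proof.
move=> n2 k3; have [tv eqv] := v_vertex_eq.
have [|t1 eq1] := @cycle_vertex_eq 1; first by rewrite n2.
have [|t2 eq2] := @cycle_vertex_eq 2; first by rewrite n2.
have cyc3 : cyc 3 = v by rewrite nth_default //= n2.
rewrite n2 in eqv *; rewrite cyc3 in eq2.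
have dw_ge2 : 2 <= (deg e w)%:Z by have := w_deg_ge2; lia.
have [dv3 dw2 a6 b1 ends] := three_cycle_arith k3 dw_ge2 tv t1 t2 eqv eq1 eq2.
by split; lia.
Qed.

Lemma long_cycle_absurd : (3 <= n)%N -> ~ 3 <= a + b - 1.
Proof.
move=> n3 k3; have [tv eqv] := v_vertex_eq.
have [|t1 eq1] := @cycle_vertex_eq 1; first by lia.
have [|t2 eq2] := @cycle_vertex_eq 2; first by lia.
have [|t3 _] := @cycle_vertex_eq 3; first by lia.
have [|tl eql] := @cycle_vertex_eq n; first by lia.
have [|tl1 eql1] := @cycle_vertex_eq n.-1; first by lia.
have [|tl2 _] := @cycle_vertex_eq n.-2; first by lia.
rewrite cycle_wrap in eql; rewrite prednK in eql1; last by lia.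
have dw_ge2 : 2 <= (deg e w)%:Z by have := w_deg_ge2; lia.
exact: (long_cycle_arith k3 dw_ge2 tv t1 t2 t3 tl tl1 tl2 eqv eq1 eq2 eql eql1).
Qed.

End InternalCycle.
End GabGraph.

Unset Implicit Arguments.

Theorem lemma3p1 (T : finType) (e : rel T) (a b : int)
  (Hsimple : simple_graph e) (Hconn : connected_graph e)
  (Hab : in_Gab e a b) (Htri : tricyclic e)
  (Hpend : exists x : T, pendant e x)
  (B : {set T}) (HB : is_base e B)
  (v w : T) (us : seq T)
  (Hcyc : internal_cycle e B v us)
  (HN : [set x in B | e v x] = [set w; nth v us 0; last v us]) :
  [/\ deg e v = 3%N,
      (size us).+1 = 3%N,
      in_Gab e 6 (-1),
      deg e w = 2%N &
      (((deg e (nth v us 0))%:Z = 2 /\ (deg e (last v us))%:Z = a + b - 1)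
       \/ ((deg e (last v us))%:Z = 2 /\ (deg e (nth v us 0))%:Z = a + b - 1))
      /\ a + b - 1 = 4].
Proof.
have [e_sym _] := Hsimple.
have k3 := cycle_k_ge3 e_sym Hconn Hab Hcyc Hpend.
have [n2 | n3] : size us = 2%N \/ (3 <= size us)%N by have := cycle_size_ge2 Hcyc; lia.
- have [dv dw a6 b1 ends] := three_cycle_degrees e_sym Hconn Hab HB Hcyc HN n2 k3.
  by subst a b; rewrite (last_nth v); split=> //; rewrite n2.
- by case: (long_cycle_absurd e_sym Hconn Hab HB Hcyc HN n3 k3).
Qed.
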